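(* Let $r\ge2$ and let $F$ be an $r$-critical graph. Then $\rho_F-(1-1/r)>0$ (where this holds trivially if $\rho_F=\infty$).
   Context: A graph $F$ is $r$-critical if $\chi(F)=r+1$ and $F$ contains an edge $e$ with $\chi(F-e)=r$. A vertex $u$ of $F$ is critical if $\chi(F-u)=r$. Let $\mathrm{Aut}(F)$ be the number of automorphisms of $F$. For $\boldsymbol{\xi}\in\mathbb{R}^r$, $P_F(\boldsymbol{\xi})=\frac{1}{\mathrm{Aut}(F)}\sum_{u\text{ critical}}\sum_{\chi_u}\prod_{i=1}^r r^{-x_i}\xi_i^{y_i}$, the inner sum over proper colorings $\chi_u:V(F)\setminus\{u\}\to[r]$ of $F-u$, with $y_i$ (resp. $x_i$) the number of neighbors (resp. non-neighbors other than $u$) of $u$ colored $i$. Let $c(n,F)$ be the minimum number of copies of $F$ in a graph obtained from the Turán graph $T_r(n)$ by adding one edge; there is a constant $\alpha_F>0$ with $c(n,F)=\alpha_F n^{f-2}+O(n^{f-3})$, $f=|V(F)|$. Let $\mathcal{S}=[0,1/r]^r$, $\mathcal{S}_\rho=\{\boldsymbol{\xi}\in\mathcal{S}:\sum_i\xi_i=\rho\}$, and $p(\rho)=\min\{P_F(\boldsymbol{\xi}):\boldsymbol{\xi}\in\mathcal{S}_\rho\}$. If $P_F$ has total degree at least $r+1$, let $\rho_F=\inf\{\rho\in(\frac{r-1}{r},1): p(\rho)\le\alpha_F(\rho-\frac{r-1}{r})\}$; if $P_F$ has total degree $r$, or $p(\rho)>\alpha_F(\rho-\frac{r-1}r)$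 for all $\rho\in(\frac{r-1}r,1)$, let $\rho_F=\infty$. *)

From HB Require Import structures.
From mathcomp Require Import all_boot all_order all_algebra all_fingroup.
From mathcomp Require Import mpoly.
From mathcomp Require Import all_classical all_reals ereal.
Set Implicit Arguments.
Unset Strict Implicit.
Unset Printing Implicit Defensive.
Import Order.TTheory GRing.Theory Num.Theory.

Section Graphs.
Variable V : finType.
Local Open Scope set_scope.

Definition simple_graph (adj : rel V) : Prop :=
  (forall x, ~~ adj x x) /\ (forall x y, adj x y = adj y x).

Definition colorable (adj : rel V) (A : {set V}) (k : nat) : bool :=
  [exists c : {ffun V -> 'I_k},
     [forall x, forall y, ((x \in A) && (y \in A) && adj x y) ==> (c x != c y)]].

Lemma colorable_card (adj : rel V) (A : {set V}) (adjI : forall x, ~~ adj x x) :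
  exists k, colorable adj A k.
Proof.
exists #|V|; apply/existsP; exists [ffun x => enum_rank x].
apply/forallP => x; apply/forallP => y; apply/implyP => /andP[_ hxy].
rewrite !ffunE; apply/negP => /eqP /enum_rank_inj exy; subst y.
by move: (adjI x); rewrite hxy.
Qed.


(** Chromatic number of the subgraph of the irreflexive relation [adj]
    induced on [A]: least k admitting a proper k-colouring. (Loops are
    removed so that the definition is total; graphs here are simple.) *)
Definition irr (adj : rel V) : rel V := fun x y => (x != y) && adj x y.

Lemma irr_irrefl (adj : rel V) x : ~~ irr adj x x.
Proof. by rewrite /irr eqxx. Qed.

Definition chi (adj : rel V) (A : {set V}) : nat :=
  ex_minn (colorable_card A (@irr_irrefl adj)).

Definition remove_edge (adj : rel V) (a b : V) : rel V :=
  fun x y => adj x y && ~~ (((x == a) && (y == b)) || ((x == b) && (y == a))).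

Definition r_critical (r : nat) (adj : rel V) : Prop :=
  chi adj [set: V]%SET = r.+1 /\
  exists a b, adj a b /\ chi (remove_edge adj a b) [set: V]%SET = r.

Definition critical_vertex (r : nat) (adj : rel V) (u : V) : bool :=
  chi adj [set~ u]%SET == r.

Definition aut (adj : rel V) : nat :=
  #|[set s : {perm V} | [forall x, forall y, adj (s x) (s y) == adj x y]]|.

(** Number of copies of F (subgraphs isomorphic to F) in a graph [g] on 'I_n,
    computed as (#injective homomorphisms F -> g) / Aut(F). *)
Definition copies (adj : rel V) (n : nat) (g : rel 'I_n) : nat :=
  #|[set phi : {ffun V -> 'I_n} | injectiveb phi &&
      [forall x, forall y, adj x y ==> g (phi x) (phi y)]]| %/ aut adj.

End Graphs.

(** Turán graph T_r(n) on 'I_n: parts are residue classes mod r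
    (sizes differ by at most one), vertices adjacent iff in different parts. *)
Definition turan (r n : nat) : rel 'I_n := fun i j => (i %% r != j %% r)%N.

Definition turan_plus (r n : nat) (a b : 'I_n) : rel 'I_n :=
  fun i j => turan r i j || ((i == a) && (j == b)) || ((i == b) && (j == a)).

Definition addable (r n : nat) (a b : 'I_n) : bool := (a != b) && ~~ turan r a b.

(** The
    neutral element n^f is an upper bound on every copy count, so the value
    is the true minimum whenever such an edge exists (n > r). *)
Definition cnF (V : finType) (r : nat) (adj : rel V) (n : nat) : nat :=
  \big[minn/(n ^ #|V|)%N]_(p : 'I_n * 'I_n | addable r p.1 p.2)
     copies adj (turan_plus r p.1 p.2).

Section Poly.
Variable R : realType.
Local Open Scope set_scope.
Local Open Scope ring_scope.
Variables (V : finType) (r : nat) (adj : rel V).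

Definition proper_u (u : V) (c : {ffun {x : V | x != u} -> 'I_r}) : bool :=
  [forall x, forall y, adj (val x) (val y) ==> (c x != c y)].

Definition ycnt (u : V) (c : {ffun {x : V | x != u} -> 'I_r}) (i : 'I_r) : nat :=
  #|[set x : {x : V | x != u} | adj u (val x) && (c x == i)]|.
Definition xcnt (u : V) (c : {ffun {x : V | x != u} -> 'I_r}) (i : 'I_r) : nat :=
  #|[set x : {x : V | x != u} | ~~ adj u (val x) && (c x == i)]|.

Definition PF : mpoly.mpoly r R :=
  (aut adj)%:R^-1 *:
  \sum_(u : V | critical_vertex r adj u)
    \sum_(c : {ffun {x : V | x != u} -> 'I_r} | proper_u c)
      \prod_(i < r)
        ((r%:R ^- xcnt c i : R) *: (@mpoly.mpolyX r R (@mpoly.mnm1 r i)) ^+ ycnt c i).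

Definition PF_eval (xi : 'I_r -> R) : R := mpoly.meval xi PF.

Definition PF_totdeg : nat := (mpoly.mmeasure (@mpoly.mdeg r) PF).-1.

Definition S_rho (rho : R) : set ('I_r -> R) :=
  [set xi | (forall i, 0 <= xi i <= r%:R^-1) /\ \sum_(i < r) xi i = rho].

(** p(rho) = min { P_F(xi) : xi in S_rho } (the min exists by compactness;
    written as the infimum). *)
Definition p_rho (rho : R) : R := inf [set PF_eval xi | xi in S_rho rho].

(** rho_F, with alpha = alpha_F supplied as a parameter. *)
Definition rhoF (alpha : R) : \bar R :=
  if (r.+1 <= PF_totdeg)%N then
    ereal_inf [set rho%:E | rho in
      [set rho : R | (r%:R - 1) / r%:R < rho < 1 /\
                     p_rho rho <= alpha * (rho - (r%:R - 1) / r%:R)]]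
  else +oo%E.

End Poly.

Local Open Scope ring_scope.

Definition is_alphaF (R : realType) (V : finType) (r : nat) (adj : rel V)
  (alpha : R) : Prop :=
  exists (C : R) (N : nat), forall n : nat, (N <= n)%N ->
    `| (cnF r adj n)%:R - alpha * n%:R ^+ (#|V| - 2) | <= C * n%:R ^+ (#|V| - 3).

(* Write [eps = rho - (1 - 1/r)] and [f = |V(F)|].  Counting: in [T_r(n)] plus an
   edge [uv] inside part [i], every copy of [F] must use [uv], since otherwise the
   parts of [T_r(n)] would properly r-colour [F].  The vertex [b] mapped to [v] is
   critical, and the parts of the other vertices give an r-colouring of [F - b] in
   which exactly one neighbour of [b] (the one mapped to [u]) has colour [i].  Hence
   [c(n,F) <= M_i (n/r + 1)^(f-2) / Aut(F)], where [M_i] counts such colourings, and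
   so [alpha_F <= M_i r^(2-f) / Aut(F)] for every colour [i].
   Polynomial: on [S_rho] let [xi_i] be a least coordinate.  Each of the [M_i]
   colourings gives a monomial of size at least [r^(1-f) r eps] (Weierstrass'
   product inequality), and since [P_F] has degree above [r] some other monomial has
   [y_i >= 2] and adds a positive term of order [eps^f]; away from the face all
   monomials are bounded below by a constant.  So [p(rho) > alpha_F eps] for all
   small [eps > 0]. *)

From Pilot Require Import Defs.
From mathcomp Require Import all_boot all_order all_algebra all_fingroup.
From mathcomp Require Import mpoly.
From mathcomp Require Import all_classical all_reals ereal.
From mathcomp Require Import lra ring.
Import Order.TTheory GRing.Theory Num.Theory.
Set Implicit Arguments.
Unset Strict Implicit.
Unset Printing Implicit Defensive.

(** * Colourings of [F] and copies of [F] in [T_r(n)] plus an edge *)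

Lemma card_le_sum_cover (T I : finType) (J : I -> finType) (A : {set T})
    (P : pred I) (Q : forall i, pred (J i)) (B : forall i, J i -> {set T}) :
  (forall x, x \in A -> exists i (j : J i), [/\ P i, Q i j & x \in B i j]) ->
  (#|A| <= \sum_(i | P i) \sum_(j | Q i j) #|B i j|)%N.
Proof.
move=> covA.
apply: (@leq_trans (\sum_(x in A) \sum_(i | P i) \sum_(j | Q i j) (x \in B i j : nat))).
  rewrite -sum1_card; apply: leq_sum => x /covA [i [j [Pi Qj xB]]].
  by rewrite (bigD1 i) //= (bigD1 j) //= xB leq_addr.
rewrite exchange_big /=; apply: leq_sum => i _.
rewrite exchange_big /=; apply: leq_sum => j _.
rewrite -sum1_card big_mkcond /= [X in (_ <= X)%N]big_mkcond /=.
by apply: leq_sum => x _; case: (x \in A); case: (x \in B i j).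
Qed.

Section Chromatic.
Variables (V : finType) (adj : rel V).

Lemma chi_min (A : {set V}) k : colorable (irr adj) A k -> (chi adj A <= k)%N.
Proof. by rewrite /chi; case: ex_minnP => m _; apply. Qed.

Lemma chi_colorable (A : {set V}) : colorable (irr adj) A (chi adj A).
Proof. by rewrite /chi; case: ex_minnP. Qed.

Lemma colorable_of (A : {set V}) k (c : V -> 'I_k) :
  (forall x y, x \in A -> y \in A -> x != y -> adj x y -> c x != c y) ->
  colorable (irr adj) A k.
Proof.
move=> c_proper; apply/existsP; exists [ffun x => c x].
apply/forallP => x; apply/forallP => y; apply/implyP => /andP[/andP[xA yA]].
by rewrite /irr => /andP[xy axy]; rewrite !ffunE; apply: c_proper.
Qed.

Lemma chi_le_card : (chi adj [set: V] <= #|V|)%N.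
Proof.
apply: chi_min; apply: (@colorable_of _ _ (@enum_rank V)) => x y _ _ xy _.
by rewrite (inj_eq enum_rank_inj).
Qed.

Variable r : nat.
Hypothesis adj_crit : r_critical r adj.

Lemma r_critical_not_colorable (c : V -> 'I_r) :
  ~ (forall x y, x != y -> adj x y -> c x != c y).
Proof.
move=> c_proper; have := chi_min (@colorable_of [set: V] _ c (fun x y _ _ => c_proper x y)).
by rewrite adj_crit.1 ltnn.
Qed.

Lemma critical_vertex_of_coloring (c : V -> 'I_r) (b : V) :
  (forall x y, x != b -> y != b -> x != y -> adj x y -> c x != c y) ->
  critical_vertex r adj b.
Proof.
move=> c_proper; rewrite /critical_vertex eqn_leq; apply/andP; split.
  apply: chi_min; apply: (@colorable_of _ _ c) => x y.
  by rewrite !in_setC1; apply: c_proper.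
rewrite leqNgt; apply/negP => lt_chi_r.
have /existsP[c' /forallP c'_proper] := chi_colorable [set~ b].
(* Give [b] a colour unused on [F - b]: an r-colouring of [F]. *)
pose c2 x : 'I_r := if x == b then Ordinal lt_chi_r else widen_ord (ltnW lt_chi_r) (c' x).
apply: (@r_critical_not_colorable c2) => x y xy axy; rewrite /c2 -val_eqE.
have [xb | xb] := eqVneq x b; have [yb | yb] := eqVneq y b => /=.
- by rewrite xb yb eqxx in xy.
- by rewrite neq_ltn ltn_ord orbT.
- by rewrite neq_ltn ltn_ord.
have /forallP /(_ y) := c'_proper x; rewrite !in_setC1 xb yb /irr xy axy.
by rewrite val_eqE.
Qed.

End Chromatic.

Definition inj_homs (V : finType) (adj : rel V) n (g : rel 'I_n) : {set {ffun V -> 'I_n}} :=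
  [set phi : {ffun V -> 'I_n} |
     injectiveb phi && [forall x, forall y, adj x y ==> g (phi x) (phi y)]].

Lemma inj_homsP (V : finType) (adj : rel V) n (g : rel 'I_n) (phi : {ffun V -> 'I_n}) :
  phi \in inj_homs adj g -> injective phi /\ forall x y, adj x y -> g (phi x) (phi y).
Proof.
rewrite inE => /andP[/injectiveP phi_inj /forallP phi_hom]; split=> // x y.
by have /forallP /(_ y) /implyP := phi_hom x.
Qed.

Lemma aut_gt0 (V : finType) (adj : rel V) : (0 < Defs.aut adj)%N.
Proof.
rewrite card_gt0; apply/set0Pn; exists 1%g; rewrite inE.
by apply/forallP => x; apply/forallP => y; rewrite !perm1.
Qed.

Section SingleNeighbourColorings.
Variables (V : finType) (r : nat) (adj : rel V).

Definition single_nbr_colorings (i : 'I_r) (b : V) : {set {ffun {x : V | x != b} -> 'I_r}} :=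
  [set c | proper_u adj c && (ycnt adj c i == 1%N)].

Definition single_nbr_count (i : 'I_r) : nat :=
  \sum_(b | critical_vertex r adj b) #|single_nbr_colorings i b|.

End SingleNeighbourColorings.

Section AddedEdge.
Variables (V : finType) (r : nat) (adj : rel V).
Hypotheses (adj_simple : simple_graph adj) (adj_crit : r_critical r adj).
Variables (n : nat) (i : 'I_r) (u0 v0 : 'I_n).
Hypotheses (u0_part : (u0 %% r = i)%N) (v0_part : (v0 %% r = i)%N) (u0v0 : u0 != v0).

Local Notation G := (turan_plus r u0 v0).

Let r_gt0 : (0 < r)%N := leq_ltn_trans (leq0n i) (ltn_ord i).

Let part (x : 'I_n) : 'I_r := Ordinal (ltn_pmod x r_gt0).

Lemma turan_plus_same_part x y :
  G x y -> (x %% r = y %% r)%N -> ((x == u0) && (y == v0)) || ((x == v0) && (y == u0)).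
Proof. by rewrite /turan_plus /turan => + same; rewrite same eqxx. Qed.

Lemma inj_hom_uses_added_edge phi : phi \in inj_homs adj G ->
  exists a b, [/\ adj a b, phi a = u0 & phi b = v0].
Proof.
move=> /inj_homsP [_ phi_hom].
case: (boolP [exists a, exists b, [&& adj a b, phi a == u0 & phi b == v0]]).
  by case/existsP => a /existsP [b /and3P[ab /eqP pa /eqP pb]]; exists a, b.
move=> no_edge; exfalso; apply: (@r_critical_not_colorable _ _ _ adj_crit (part \o phi)).
move=> x y _ axy; rewrite -val_eqE /=; apply/eqP => same.
case/orP: (turan_plus_same_part (phi_hom x y axy) same) => /andP[/eqP px /eqP py];
  move/existsP: no_edge; apply.
- by exists x; apply/existsP; exists y; rewrite axy px py !eqxx.
- by exists y; apply/existsP; exists x; rewrite adj_simple.2 axy px py !eqxx.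
Qed.

Lemma inj_hom_part_proper phi b x y : phi \in inj_homs adj G -> phi b = v0 ->
  x != b -> y != b -> adj x y -> (phi x %% r != phi y %% r)%N.
Proof.
move=> /inj_homsP [phi_inj phi_hom] pb xb yb axy; apply/eqP => same.
case/orP: (turan_plus_same_part (phi_hom x y axy) same) => /andP[/eqP px /eqP py].
- by move: yb; rewrite -pb in py; rewrite (phi_inj _ _ py) eqxx.
- by move: xb; rewrite -pb in px; rewrite (phi_inj _ _ px) eqxx.
Qed.

Definition hom_fiber (b : V) (c : {ffun {x : V | x != b} -> 'I_r}) : {set {ffun V -> 'I_n}} :=
  [set phi in inj_homs adj G |
    (phi b == v0) && [forall x : {x : V | x != b}, (phi (val x) %% r)%N == c x]].

Lemma inj_homs_covered phi : phi \in inj_homs adj G ->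
  exists b (c : {ffun {x : V | x != b} -> 'I_r}),
    [/\ critical_vertex r adj b, c \in single_nbr_colorings adj i b & phi \in hom_fiber c].
Proof.
move=> phiG; have [phi_inj phi_hom] := inj_homsP phiG.
have [a [b [ab pa pb]]] := inj_hom_uses_added_edge phiG.
have proper := inj_hom_part_proper phiG pb.
have a_b : a != b by apply: contraTneq ab => ->; rewrite (negbTE (adj_simple.1 b)).
exists b, [ffun x : {x : V | x != b} => part (phi (val x))]; split.
- apply: (@critical_vertex_of_coloring _ _ _ adj_crit (part \o phi) b) => x y xb yb _ axy.
  by rewrite -val_eqE; apply: proper.
- rewrite inE; apply/andP; split.
    apply/forallP => x; apply/forallP => y; apply/implyP => axy.
    by rewrite !ffunE -val_eqE; apply: proper (valP x) (valP y) axy.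
  apply/cards1P; exists (exist _ a a_b); apply/setP => x; rewrite !inE ffunE -val_eqE /=.
  apply/andP/eqP => [[bx /eqP xi] | ->]; last by rewrite adj_simple.2 ab pa u0_part.
  have same : (phi b %% r = phi (val x) %% r)%N by rewrite pb v0_part xi.
  case/orP: (turan_plus_same_part (phi_hom _ _ bx) same) => /andP[/eqP pbu /eqP px].
    by move: u0v0; rewrite -pb pbu eqxx.
  by apply: val_inj; apply: phi_inj; rewrite px pa.
- by rewrite inE phiG pb eqxx /=; apply/forallP => x; rewrite ffunE.
Qed.

Lemma hom_fiberP b (c : {ffun {x : V | x != b} -> 'I_r}) phi : phi \in hom_fiber c ->
  [/\ phi \in inj_homs adj G, phi b = v0 & forall x, (phi (val x) %% r)%N = c x].
Proof.
by rewrite inE => /andP[phiG /andP[/eqP pb /forallP pc]]; split=> // x; apply/eqP.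
Qed.

(* A homomorphism in a fiber is determined by its values at a and b, which are
   forced, and by the quotients [phi x %/ r] elsewhere. *)
Lemma card_hom_fiber_le b (c : {ffun {x : V | x != b} -> 'I_r}) :
  c \in single_nbr_colorings adj i b -> (#|hom_fiber c| <= (n %/ r).+1 ^ (#|V| - 2))%N.
Proof.
rewrite inE => /andP[_ /cards1P [a' nbr_i]].
have : a' \in [set x | adj b (val x) && (c x == i)] by rewrite nbr_i set11.
rewrite inE => /andP[ba /eqP ca]; set a := val a'; have ab : a != b := valP a'.
have fiber_a phi : phi \in hom_fiber c -> phi a = u0.
  case/hom_fiberP => /inj_homsP [_ phi_hom] pb pc.
  have same : (phi b %% r = phi a %% r)%N by rewrite pb v0_part pc ca.
  case/orP: (turan_plus_same_part (phi_hom _ _ ba) same) => /andP[/eqP pbu /eqP pau] //.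
  by move: u0v0; rewrite -pb pbu eqxx.
pose k := (n %/ r).+1.
have quo_lt (phi : {ffun V -> 'I_n}) x : (phi x %/ r < k)%N by rewrite ltnS leq_div2r // ltnW.
pose quo (phi : {ffun V -> 'I_n}) : {ffun {x : V | x \notin [set a; b]} -> 'I_k} :=
  [ffun x => inord (phi (val x) %/ r)].
apply: (leq_trans (@leq_card_in _ _ quo (mem (hom_fiber c)) _)).
  move=> phi1 phi2 h1 h2 /ffunP eq_quo; apply/ffunP => x.
  have [[_ pb1 pc1] [_ pb2 pc2]] := (hom_fiberP h1, hom_fiberP h2).
  have [-> | xb] := eqVneq x b; first by rewrite pb1 pb2.
  have [-> | xa] := eqVneq x a; first by rewrite !fiber_a.
  have xab : x \notin [set a; b] by rewrite !inE negb_or xa xb.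
  have := eq_quo (exist _ x xab); rewrite !ffunE /= => /(congr1 val).
  rewrite /= !inordK ?quo_lt // => eq_div.
  apply: val_inj; rewrite /= (divn_eq (phi1 x) r) (divn_eq (phi2 x) r) eq_div.
  by rewrite (pc1 (exist _ x xb)) (pc2 (exist _ x xb)).
rewrite card_ffun card_ord card_sig.
have -> : #|[pred x | x \notin [set a; b]]| = #|~: [set a; b]| by apply: eq_card => x; rewrite !inE.
by rewrite -(cardsC [set a; b]) cards2 ab addKn.
Qed.

Lemma card_inj_homs_le :
  (#|inj_homs adj G| <= single_nbr_count adj i * (n %/ r).+1 ^ (#|V| - 2))%N.
Proof.
apply: leq_trans (card_le_sum_cover inj_homs_covered) _.
rewrite big_distrl /=; apply: leq_sum => b _.
rewrite -(sum1_card (mem (single_nbr_colorings adj i b))) big_distrl /=.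
by apply: leq_sum => c /card_hom_fiber_le; rewrite mul1n.
Qed.

End AddedEdge.

Lemma cnF_le (V : finType) (r : nat) (adj : rel V) (i : 'I_r) (n : nat) :
  simple_graph adj -> r_critical r adj -> (i + r < n)%N ->
  (cnF r adj n <= (single_nbr_count adj i * (n %/ r).+1 ^ (#|V| - 2)) %/ Defs.aut adj)%N.
Proof.
move=> adj_simple adj_crit irn.
have r_gt0 : (0 < r)%N := leq_ltn_trans (leq0n i) (ltn_ord i).
pose u0 : 'I_n := Ordinal (leq_ltn_trans (leq_addr r i) irn).
pose v0 : 'I_n := Ordinal irn.
have u0_part : (u0 %% r = i)%N by rewrite /= (modn_small (ltn_ord i)).
have v0_part : (v0 %% r = i)%N by rewrite /= modnDr (modn_small (ltn_ord i)).
have u0v0 : u0 != v0 by rewrite -val_eqE /= -{1}[val i]addn0 eqn_add2l eq_sym -lt0n.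
have u0v0_addable : addable r u0 v0 by rewrite /addable u0v0 /turan u0_part v0_part eqxx.
have min_le := @bigmin_le_cond _ _ _ (n ^ #|V|)%N (u0, v0) (fun p => addable r p.1 p.2)
  (fun p => copies adj (turan_plus r p.1 p.2)) u0v0_addable.
by rewrite /cnF -minEnat (leq_trans min_le) // leq_div2r // card_inj_homs_le.
Qed.

Section ColoringCounts.
Variables (V : finType) (r : nat) (adj : rel V) (u : V).
Implicit Type c : {ffun {x : V | x != u} -> 'I_r}.

Lemma xcnt_add_ycnt c j : (xcnt adj c j + ycnt adj c j = #|[set x | c x == j]|)%N.
Proof.
rewrite /xcnt /ycnt -(cardsID [set x | adj u (val x)] [set x | c x == j]) addnC.
by congr (_ + _); apply: eq_card => x; rewrite !inE andbC.
Qed.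

Lemma sum_xcnt_ycnt c : (\sum_(j < r) (xcnt adj c j + ycnt adj c j) = #|V|.-1)%N.
Proof.
rewrite -(cardC1 u) -card_sig -sum1_card (partition_big c xpredT) //=.
by apply: eq_bigr => j _; rewrite xcnt_add_ycnt sum1dep_card cardsE.
Qed.

Lemma sum_ycnt_le c : (\sum_(j < r) ycnt adj c j <= #|V|)%N.
Proof.
rewrite -(leq_add2l (\sum_(j < r) xcnt adj c j)) -big_split /= sum_xcnt_ycnt.
by rewrite (leq_trans (leq_pred _)) ?leq_addl.
Qed.

Lemma ycnt_le c j : (ycnt adj c j <= #|V|)%N.
Proof. by apply: leq_trans (sum_ycnt_le c); rewrite (bigD1 j) //= leq_addr. Qed.

Lemma proper_u_tperm c (i j : 'I_r) :
  proper_u adj c -> proper_u adj [ffun x => tperm i j (c x)].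
Proof.
move=> /forallP c_proper; apply/forallP => x; apply/forallP => y; apply/implyP => axy.
by rewrite !ffunE (inj_eq perm_inj); apply: (implyP (forallP (c_proper x) y)).
Qed.

Lemma ycnt_tperm c (i j : 'I_r) : ycnt adj [ffun x => tperm i j (c x)] i = ycnt adj c j.
Proof.
apply: eq_card => x; rewrite !inE ffunE.
by rewrite (can2_eq (tpermK i j) (tpermK i j)) tpermL.
Qed.

End ColoringCounts.

Local Open Scope ring_scope.

(** * Elementary inequalities *)

Section RealInequalities.
Variable R : realFieldType.
Implicit Types (a h t : R).

Lemma expr_ge_1_sub_mul t (y : nat) : 0 <= t <= 1 -> 1 - y%:R * t <= (1 - t) ^+ y.
Proof.
move=> /andP[t0 t1]; elim: y => [|y IH]; first by rewrite mul0r subr0 expr0.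
rewrite exprS -natr1.
have : (1 - t) * (1 - y%:R * t) <= (1 - t) * (1 - t) ^+ y by apply: ler_wpM2l; lra.
have : 0 <= y%:R * t * t by rewrite !mulr_ge0.
nra.
Qed.

Lemma prod_ge_1_sub_sum (I : Type) (s : seq I) (P : pred I) (p : I -> R) :
  (forall k, 0 <= p k <= 1) ->
  1 - \sum_(k <- s | P k) (1 - p k) <= \prod_(k <- s | P k) p k.
Proof.
move=> p01; elim: s => [|a s IH]; first by rewrite !big_nil subr0.
rewrite !big_cons; case: (P a) => //.
have /andP[pa0 pa1] := p01 a.
have S0 : 0 <= \sum_(k <- s | P k) (1 - p k).
  by apply: sumr_ge0 => k _; have := p01 k; lra.
have : p a * (1 - \sum_(k <- s | P k) (1 - p k)) <= p a * \prod_(k <- s | P k) p k.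
  exact: ler_wpM2l.
have : 0 <= (1 - p a) * \sum_(k <- s | P k) (1 - p k) by rewrite mulr_ge0 //; lra.
nra.
Qed.

Lemma prod_expr_ge_1_sub_sum (I : finType) (P : pred I) (t : I -> R) (y : I -> nat) :
  (forall j, 0 <= t j <= 1) ->
  1 - \sum_(j | P j) (y j)%:R * t j <= \prod_(j | P j) (1 - t j) ^+ y j.
Proof.
move=> t01; apply: le_trans (prod_ge_1_sub_sum _ _ _); last first.
  by move=> k; have /andP[t0 t1] := t01 k; rewrite exprn_ge0 ?exprn_ile1 //; lra.
rewrite lerD2l lerN2; apply: ler_sum => j _.
by have := expr_ge_1_sub_mul (y j) (t01 j); lra.
Qed.

Lemma exprD_le_lin a h (e : nat) :
  0 <= a <= 1 -> 0 <= h <= 1 -> (a + h) ^+ e <= a ^+ e + h * (e%:R * 2 ^+ e).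
Proof.
move=> /andP[a0 a1] /andP[h0 h1]; elim: e => [|e IH].
  by rewrite !expr0 mul0r mulr0 addr0.
have ae1 : a ^+ e <= 1 by apply: exprn_ile1.
have ae0 : 0 <= a ^+ e by apply: exprn_ge0.
have P1 : 1 <= 2 ^+ e :> R by apply: exprn_ege1; lra.
rewrite exprS (exprS a) (exprS 2).
apply: (le_trans (ler_wpM2l (addr_ge0 a0 h0) IH)).
set P := 2 ^+ e in P1 *; set W := a ^+ e in ae1 ae0 *.
have E0 : 0 <= e%:R :> R by rewrite ler0n.
have k1 : h * W <= h * P by apply: ler_wpM2l => //; lra.
have k2 : (a + h) * (h * (e%:R * P)) <= 2 * (h * (e%:R * P)).
  by apply: ler_wpM2r; [rewrite !mulr_ge0 //; lra | lra].
have hP : 0 <= h * P by rewrite mulr_ge0 //; lra.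
rewrite -natr1; nra.
Qed.

Lemma prod_expr_ge_single (I : finType) (w : I -> R) (y : I -> nat) i f :
  y i = 1%N -> (forall j, 0 <= w j <= 1) -> (forall j, y j <= f)%N -> f%:R * w i <= 1 ->
  w i - \sum_(j | j != i) (1 - w j) <= \prod_j w j ^+ y j.
Proof.
move=> yi w01 y_le fwi.
set S := \sum_(j | j != i) (1 - w j).
have S0 : 0 <= S by apply: sumr_ge0 => j _; have := w01 j; lra.
have wi0 : 0 <= w i by have /andP[] := w01 i.
rewrite (bigD1 i) //= yi expr1.
have weier : 1 - f%:R * S <= \prod_(j | j != i) w j ^+ y j.
  have -> : \prod_(j | j != i) w j ^+ y j = \prod_(j | j != i) (1 - (1 - w j)) ^+ y j.
    by apply: eq_bigr => j _; rewrite opprB addrC subrK.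
  apply: le_trans (prod_expr_ge_1_sub_sum _ _ _); last by move=> j; have := w01 j; lra.
  rewrite lerD2l lerN2 /S mulr_sumr; apply: ler_sum => j _.
  by rewrite ler_wpM2r ?ler_nat ?y_le //; have := w01 j; lra.
have := ler_wpM2l wi0 weier.
have : 0 <= S * (1 - f%:R * w i) by rewrite mulr_ge0 //; lra.
nra.
Qed.

End RealInequalities.

Lemma le_of_le_add_div_nat (R : archiRealFieldType) (a b K : R) (N : nat) :
  (forall n, (N < n)%N -> a <= b + K / n%:R) -> a <= b.
Proof.
move=> ab_n; rewrite leNgt; apply/negP => ba.
have d0 : 0 < a - b by rewrite subr_gt0.
pose n := (N.+1 + Num.bound (`|K| / (a - b)))%N.
have n0 : 0 < n%:R :> R by rewrite ltr0n /n addSn.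
have Kn : `|K| / (a - b) < n%:R.
  apply: lt_le_trans (archi_boundP _) _; first by rewrite divr_ge0 // ltW.
  by rewrite ler_nat leq_addl.
have : K / n%:R < a - b.
  rewrite ltr_pdivrMr //; rewrite ltr_pdivrMr // in Kn.
  by have := ler_norm K; nra.
have := ab_n n (leq_addr _ _); lra.
Qed.

(** * An upper bound on [alpha_F] *)

Lemma cnF_le_real (R : realFieldType) (V : finType) (r : nat) (adj : rel V) (i : 'I_r) n :
  simple_graph adj -> r_critical r adj -> (i + r < n)%N ->
  (cnF r adj n)%:R <= (single_nbr_count adj i)%:R / (Defs.aut adj)%:R *
                       (n%:R / r%:R + 1) ^+ (#|V| - 2) :> R.
Proof.
move=> adj_simple adj_crit irn.
have r_gt0 : 0 < r%:R :> R by rewrite ltr0n (leq_ltn_trans (leq0n i) (ltn_ord i)).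
have aut_gt0R : 0 < (Defs.aut adj)%:R :> R by rewrite ltr0n aut_gt0.
set M := single_nbr_count adj i; set e := (#|V| - 2)%N.
apply: le_trans (_ : ((M * (n %/ r).+1 ^ e) %/ Defs.aut adj)%:R <= _).
  by rewrite ler_nat cnF_le.
apply: le_trans (_ : (M * (n %/ r).+1 ^ e)%:R / (Defs.aut adj)%:R <= _).
  by rewrite ler_pdivlMr // -natrM ler_nat leq_divM.
rewrite natrM natrX mulrAC; apply: ler_wpM2l; first by rewrite divr_ge0 ?ler0n.
apply: lerXn2r; rewrite ?nnegrE ?ler0n ?addr_ge0 ?divr_ge0 ?ler0n //.
by rewrite -natr1 lerD2r ler_pdivlMr // -natrM ler_nat leq_divM.
Qed.

Lemma alphaF_le (R : realType) (V : finType) (r : nat) (adj : rel V) (alpha : R) (i : 'I_r) :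
  simple_graph adj -> r_critical r adj -> (3 <= #|V|)%N -> is_alphaF r adj alpha ->
  alpha <= (single_nbr_count adj i)%:R / (Defs.aut adj)%:R * r%:R ^- (#|V| - 2).
Proof.
move=> adj_simple adj_crit V3 [C [N alphaC]].
have r_ge1 : 1 <= r%:R :> R by rewrite ler1n (leq_ltn_trans (leq0n i) (ltn_ord i)).
set A := (single_nbr_count adj i)%:R / _; set e := (#|V| - 2)%N; pose K : R := e%:R * 2 ^+ e.
have A0 : 0 <= A by rewrite divr_ge0 ?ler0n.
apply: (@le_of_le_add_div_nat _ _ _ (A * K + C) (maxn N (i + r))) => n.
rewrite gtn_max => /andP[/ltnW Nn irn].
set x : R := n%:R.
have x_ge1 : 1 <= x by rewrite ler1n (leq_ltn_trans _ irn).
have xe_gt0 : 0 < x ^+ e by rewrite exprn_gt0 //; lra.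
have x3 : x ^+ (#|V| - 3) = x ^+ e / x.
  by rewrite /e -(subnSK V3) exprS mulrC mulKf // gt_eqF //; lra.
have binom : (x / r%:R + 1) ^+ e <= x ^+ e * (r%:R ^- e + x^-1 * K).
  have -> : x / r%:R + 1 = x * (r%:R^-1 + x^-1) by rewrite mulrDr mulfV ?gt_eqF //; lra.
  rewrite exprMn; apply: ler_wpM2l; first exact: ltW.
  by rewrite -exprVn; apply: exprD_le_lin; rewrite invr_ge0 invf_le1 //; lra.
have /ler_normlP[lower _] := alphaC n Nn; rewrite -/x -/e x3 in lower.
have upper := ler_wpM2l A0 binom.
have := @cnF_le_real R _ _ _ i n adj_simple adj_crit irn; rewrite -/x -/e -/A => cnF_upper.
rewrite -(ler_pM2r xe_gt0).
have -> : (A * r%:R ^- e + (A * K + C) / x) * x ^+ e =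
          A * (x ^+ e * (r%:R ^- e + x^-1 * K)) + C * (x ^+ e / x) by ring.
lra.
Qed.

(** * Lower bounds on [P_F] *)

Section PFTerms.
Variables (R : realType) (V : finType) (r : nat) (adj : rel V).
Implicit Types (xi : 'I_r -> R) (u : V).

Definition PF_term u (c : {ffun {x : V | x != u} -> 'I_r}) xi : R :=
  \prod_(j < r) (r%:R ^- xcnt adj c j * xi j ^+ ycnt adj c j).

Lemma PF_evalE xi : PF_eval adj xi = (Defs.aut adj)%:R^-1 *
  \sum_(u | critical_vertex r adj u)
    \sum_(c : {ffun {x : V | x != u} -> 'I_r} | proper_u adj c) PF_term c xi.
Proof.
rewrite /PF_eval /PF mevalZ; congr (_ * _).
rewrite (big_morph _ (mevalD xi) (meval0 xi)); apply: eq_bigr => u _.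
rewrite (big_morph _ (mevalD xi) (meval0 xi)); apply: eq_bigr => c _.
rewrite (big_morph _ (@mevalM _ _ xi) (meval1 xi)); apply: eq_bigr => j _.
rewrite mevalZ (rmorphXn (meval xi)).
by congr (_ * _ ^+ _); apply: mevalXU.
Qed.

Lemma PF_term_ge0 u (c : {ffun {x : V | x != u} -> 'I_r}) xi :
  (forall j, 0 <= xi j) -> 0 <= PF_term c xi.
Proof.
by move=> xi_ge0; apply: prodr_ge0 => j _; rewrite mulr_ge0 ?invr_ge0 ?exprn_ge0 ?ler0n.
Qed.

Hypothesis r_gt0 : (0 < r)%N.

(* Each colour class contributes [r^-(x_j + y_j)], and the class sizes add up to [f - 1]. *)
Lemma PF_termE u (c : {ffun {x : V | x != u} -> 'I_r}) xi :
  PF_term c xi = r%:R ^- #|V|.-1 * \prod_(j < r) (r%:R * xi j) ^+ ycnt adj c j.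
Proof.
have r_neq0 : r%:R != 0 :> R by rewrite pnatr_eq0 -lt0n.
rewrite /PF_term -(sum_xcnt_ycnt adj c) -prodrXr -prodfV -big_split /=; apply: eq_bigr => j _.
rewrite exprMn exprD invfM -!mulrA; congr (_ * _).
by rewrite mulrA mulVf ?mul1r // expf_neq0.
Qed.

Lemma PF_term_ge_uniform u (c : {ffun {x : V | x != u} -> 'I_r}) xi (a : R) :
  0 <= a <= 1 -> (forall j, a <= r%:R * xi j) ->
  r%:R ^- #|V|.-1 * a ^+ #|V| <= PF_term c xi.
Proof.
move=> /andP[a0 a1] a_le; rewrite PF_termE; apply: ler_wpM2l.
  by rewrite invr_ge0 exprn_ge0 // ler0n.
apply: le_trans (ler_wiXn2l a0 a1 (sum_ycnt_le adj c)) _.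
rewrite -prodrXr; apply: ler_prod => j _.
by rewrite exprn_ge0 //= lerXn2r // nnegrE // (le_trans a0).
Qed.

Lemma PF_term_single_nbr_ge u (c : {ffun {x : V | x != u} -> 'I_r}) xi (i : 'I_r) :
  ycnt adj c i = 1%N -> (forall j, 0 <= r%:R * xi j <= 1) -> #|V|%:R * (r%:R * xi i) <= 1 ->
  r%:R ^- #|V|.-1 * (r%:R * xi i - \sum_(j | j != i) (1 - r%:R * xi j)) <= PF_term c xi.
Proof.
move=> ycnt_i w01 fwi; rewrite PF_termE; apply: ler_wpM2l.
  by rewrite invr_ge0 exprn_ge0 // ler0n.
exact: (prod_expr_ge_single ycnt_i w01 (ycnt_le adj c)).
Qed.

End PFTerms.

Section PFDegree.
Variables (R : realType) (V : finType) (r : nat) (adj : rel V).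

Lemma exists_term_deg_gt : (r.+1 <= PF_totdeg R r adj)%N ->
  exists u (c : {ffun {x : V | x != u} -> 'I_r}),
    [/\ critical_vertex r adj u, proper_u adj c & (r < \sum_(j < r) ycnt adj c j)%N].
Proof.
move=> deg_gt.
case: (boolP [exists u, exists c : {ffun {x : V | x != u} -> 'I_r},
    [&& critical_vertex r adj u, proper_u adj c & (r < \sum_(j < r) ycnt adj c j)%N]]).
  by case/existsP => u /existsP [c /and3P [? ? ?]]; exists u, c.
move=> no_term; suff : (msize (PF R r adj) <= r.+1)%N.
  move=> size_le; suff : (PF_totdeg R r adj <= r)%N by rewrite leqNgt deg_gt.
  by rewrite /PF_totdeg -subn1 leq_subLR add1n.
apply: (leq_trans (msizeZ_le _ _)).
apply: (leq_trans (msize_sum _ _ _)); apply/bigmax_leqP => u crit_u.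
apply: (leq_trans (msize_sum _ _ _)); apply/bigmax_leqP => c proper_c.
rewrite scaler_prod; apply: (leq_trans (msizeZ_le _ _)).
rewrite mprodXnE msizeX mdeg_sum ltnS.
have : ~~ (r < \sum_(j < r) ycnt adj c j)%N.
  by apply: contra no_term => deg_c; apply/existsP; exists u; apply/existsP; exists c; apply/and3P.
rewrite -leqNgt; apply: leq_trans; apply: leq_sum => j _.
by rewrite mdegMn mdeg1 mul1n.
Qed.

(* Some colour class meets the neighbourhood of u twice; a transposition of colours
   moves it to i. *)
Lemma exists_term_ycnt_ge2 : (r.+1 <= PF_totdeg R r adj)%N -> forall i : 'I_r,
  exists u (c : {ffun {x : V | x != u} -> 'I_r}),
    [/\ critical_vertex r adj u, proper_u adj c & (2 <= ycnt adj c i)%N].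
Proof.
move=> /exists_term_deg_gt [u [c [crit_u proper_c deg_c]]] i.
have [j ycnt_j] : exists j, (2 <= ycnt adj c j)%N.
  apply/existsP; apply: contraLR deg_c; rewrite negb_exists -leqNgt => /forallP ycnt_le1.
  by rewrite -[X in (_ <= X)%N]card_ord -sum1_card leq_sum // => j _; rewrite leqNgt ycnt_le1.
by exists u, [ffun x => tperm i j (c x)]; rewrite proper_u_tperm // ycnt_tperm.
Qed.

End PFDegree.

Section PFLowerBound.
Variables (R : realType) (V : finType) (r : nat) (adj : rel V).
Hypotheses (r_gt0 : (0 < r)%N) (deg_gt : (r.+1 <= PF_totdeg R r adj)%N).

Let r_gt0R : 0 < r%:R :> R. Proof. by rewrite ltr0n. Qed.

Let aut_inv_ge0 : 0 <= (Defs.aut adj)%:R^-1 :> R. Proof. by rewrite invr_ge0 ler0n. Qed.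

Lemma sum_single_nbr_add_le (i : 'I_r)
    (F : forall u, {ffun {x : V | x != u} -> 'I_r} -> R) u0 c0 :
  critical_vertex r adj u0 -> proper_u adj c0 -> ycnt adj c0 i != 1%N ->
  (forall u c, 0 <= F u c) ->
  \sum_(u | critical_vertex r adj u) \sum_(c in single_nbr_colorings adj i u) F u c + F u0 c0 <=
  \sum_(u | critical_vertex r adj u)
    \sum_(c : {ffun {x : V | x != u} -> 'I_r} | proper_u adj c) F u c.
Proof.
move=> crit_u0 proper_c0 ycnt_c0 F_ge0.
rewrite [X in _ <= X](eq_bigr (fun u => \sum_(c in single_nbr_colorings adj i u) F u c +
    \sum_(c : {ffun {x : V | x != u} -> 'I_r} | proper_u adj c && (ycnt adj c i != 1%N)) F u c));
  last by move=> u _; rewrite (bigID (fun c => ycnt adj c i == 1%N)); congr (_ + _);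
          apply: eq_bigl => c; rewrite inE.
rewrite big_split /= lerD2l (bigD1 u0) //= (bigD1 c0) /=; last by rewrite proper_c0.
by rewrite -addrA lerDl addr_ge0 // sumr_ge0 // => *; rewrite sumr_ge0.
Qed.

Lemma PF_eval_ge_uniform (xi : 'I_r -> R) (a : R) :
  0 <= a <= 1 -> (forall j, a <= r%:R * xi j) ->
  (Defs.aut adj)%:R^-1 * (r%:R ^- #|V|.-1 * a ^+ #|V|) <= PF_eval adj xi.
Proof.
move=> a01 a_le; have xi_ge0 j : 0 <= xi j.
  by rewrite -(pmulr_rge0 _ r_gt0R); case/andP: a01 => a0 _; apply: le_trans a0 (a_le j).
have [u0 [c0 [crit_u0 proper_c0 ycnt_c0]]] := exists_term_ycnt_ge2 deg_gt (Ordinal r_gt0).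
have ycnt_neq1 : ycnt adj c0 (Ordinal r_gt0) != 1%N by rewrite neq_ltn ycnt_c0 orbT.
have F_ge0 u (c : {ffun {x : V | x != u} -> 'I_r}) : 0 <= PF_term adj c xi.
  exact: PF_term_ge0.
rewrite PF_evalE; apply: ler_wpM2l => //.
apply: le_trans (sum_single_nbr_add_le crit_u0 proper_c0 ycnt_neq1 F_ge0).
rewrite -[X in X <= _]add0r lerD ?(PF_term_ge_uniform adj r_gt0) //.
by rewrite sumr_ge0 // => u _; rewrite sumr_ge0.
Qed.

Lemma PF_eval_ge_near (xi : 'I_r -> R) (i : 'I_r) (eps : R) :
  (forall j, 0 <= r%:R * xi j <= 1) -> (forall j, xi i <= xi j) ->
  #|V|%:R * (r%:R * xi i) <= 1 -> 0 <= eps ->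
  \sum_(j < r) xi j = (r%:R - 1) / r%:R + eps ->
  (Defs.aut adj)%:R^-1 * ((single_nbr_count adj i)%:R * (r%:R ^- #|V|.-1 * (r%:R * eps)) +
     r%:R ^- #|V|.-1 * (r%:R * eps) ^+ #|V|) <= PF_eval adj xi.
Proof.
move=> w01 xi_min fwi eps_ge0 xi_sum.
have xi_ge0 j : 0 <= xi j by rewrite -(pmulr_rge0 _ r_gt0R); case/andP: (w01 j).
have F_ge0 u (c : {ffun {x : V | x != u} -> 'I_r}) : 0 <= PF_term adj c xi.
  exact: PF_term_ge0.
have eps_eq : r%:R * eps = r%:R * xi i - \sum_(j | j != i) (1 - r%:R * xi j).
  have : \sum_(j < r) (1 - r%:R * xi j) = 1 - r%:R * eps.
    rewrite sumrB sumr_const card_ord -mulr_sumr xi_sum mulrDr.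
    by rewrite [r%:R * (_ / _)]mulrC divfK ?gt_eqF //; lra.
  by rewrite (bigD1 i) //=; lra.
have S_ge0 : 0 <= \sum_(j | j != i) (1 - r%:R * xi j).
  by rewrite sumr_ge0 // => j _; case/andP: (w01 j); lra.
have [u0 [c0 [crit_u0 proper_c0 ycnt_c0]]] := exists_term_ycnt_ge2 deg_gt i.
have ycnt_neq1 : ycnt adj c0 i != 1%N by rewrite neq_ltn ycnt_c0 orbT.
rewrite PF_evalE; apply: ler_wpM2l => //.
apply: le_trans (sum_single_nbr_add_le crit_u0 proper_c0 ycnt_neq1 F_ge0).
apply: lerD; last first.
  apply: (PF_term_ge_uniform adj r_gt0) => [|j].
    by case/andP: (w01 i) => wi0 wi1; rewrite mulr_ge0 ?ler0n //=; lra.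
  by apply: le_trans (ler_wpM2l (ler0n _ _) (xi_min j)); lra.
rewrite /single_nbr_count natr_sum mulr_suml; apply: ler_sum => u _.
rewrite mulr_natl -sumr_const; apply: ler_sum => c; rewrite inE => /andP[_ /eqP ycnt_i].
by rewrite eps_eq; apply: PF_term_single_nbr_ge.
Qed.

Lemma PF_eval_ge_on_S_rho (xi : 'I_r -> R) (eps : R) :
  (0 < #|V|)%N -> 0 <= eps -> S_rho ((r%:R - 1) / r%:R + eps) xi ->
  (Defs.aut adj)%:R^-1 * (r%:R ^- #|V|.-1 * #|V|%:R^-1 ^+ #|V|) <= PF_eval adj xi \/
  exists i : 'I_r, (Defs.aut adj)%:R^-1 *
    ((single_nbr_count adj i)%:R * (r%:R ^- #|V|.-1 * (r%:R * eps)) +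
     r%:R ^- #|V|.-1 * (r%:R * eps) ^+ #|V|) <= PF_eval adj xi.
Proof.
move=> V_gt0 eps_ge0 [xi01 xi_sum].
have f_gt0 : 0 < #|V|%:R :> R by rewrite ltr0n.
have w01 j : 0 <= r%:R * xi j <= 1.
  case/andP: (xi01 j) => xi0 xi1; rewrite mulr_ge0 ?ler0n //=.
  by rewrite mulrC -ler_pdivlMr // mul1r.
have r_eta : r%:R * (#|V|%:R * r%:R)^-1 = #|V|%:R^-1 :> R.
  by rewrite invfM mulrCA mulfV ?gt_eqF // mulr1.
have [i _ xi_min] := @arg_minP _ R 'I_r (Ordinal r_gt0) xpredT xi isT.
have [far | near] := leP (#|V|%:R * r%:R)^-1 (xi i); [left | right; exists i].
  apply: PF_eval_ge_uniform => [|j]; first by rewrite invr_ge0 ltW //= invf_le1 // ler1n.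
  by rewrite -r_eta ler_wpM2l ?ler0n // (le_trans far (xi_min j _)).
apply: PF_eval_ge_near => // [j|]; first exact: xi_min.
have : #|V|%:R * (r%:R * xi i) <= #|V|%:R * (r%:R * (#|V|%:R * r%:R)^-1).
  by rewrite ler_wpM2l ?ler0n // ler_wpM2l ?ler0n // ltW.
by rewrite r_eta mulfV ?gt_eqF.
Qed.

End PFLowerBound.

Lemma PF_eval_gt_linear (R : realType) (V : finType) (r : nat) (adj : rel V) (alpha : R) :
  (0 < r)%N -> (2 <= #|V|)%N -> (r.+1 <= PF_totdeg R r adj)%N -> 0 < alpha ->
  (forall i : 'I_r,
     alpha <= (single_nbr_count adj i)%:R / (Defs.aut adj)%:R * r%:R ^- (#|V| - 2)) ->
  exists2 delta : R, 0 < delta & forall eps, 0 < eps < delta ->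
    exists2 L, alpha * eps < L &
      forall xi : 'I_r -> R, S_rho ((r%:R - 1) / r%:R + eps) xi -> L <= PF_eval adj xi.
Proof.
move=> r_gt0 V2 deg_gt alpha_gt0 alphaF_le.
have r_gt0R : 0 < r%:R :> R by rewrite ltr0n.
set f := #|V|; have f_gt0 : 0 < f%:R :> R by rewrite ltr0n ltnW.
set aR : R := (Defs.aut adj)%:R; have aR_gt0 : 0 < aR by rewrite ltr0n aut_gt0.
set rk : R := r%:R ^- f.-1; have rk_gt0 : 0 < rk by rewrite invr_gt0 exprn_gt0.
pose c1 : R := aR^-1 * (rk * f%:R^-1 ^+ f).
have c1_gt0 : 0 < c1 by rewrite !mulr_gt0 ?invr_gt0 ?exprn_gt0 ?invr_gt0.
exists (c1 / alpha); first by rewrite divr_gt0.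
move=> eps /andP[eps_gt0]; rewrite ltr_pdivlMr // => eps_c1.
pose gam : R := aR^-1 * (rk * (r%:R * eps) ^+ f).
have gam_gt0 : 0 < gam by rewrite !mulr_gt0 ?invr_gt0 ?exprn_gt0 ?mulr_gt0.
exists (Num.min c1 (alpha * eps + gam)); first by rewrite lt_min ltrDl gam_gt0 andbT; lra.
move=> xi xi_S; rewrite ge_min.
case: (PF_eval_ge_on_S_rho r_gt0 deg_gt (ltnW V2) (ltW eps_gt0) xi_S) => [far | [i near]].
  by rewrite far.
have rkr : rk * r%:R = r%:R ^- (f - 2).
  by rewrite /rk -subn1 -(subnSK V2) exprS invfM mulrAC mulVf ?mul1r ?gt_eqF.
have alpha_eps : alpha * eps <= aR^-1 * ((single_nbr_count adj i)%:R * (rk * (r%:R * eps))).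
  have := ler_wpM2r (ltW eps_gt0) (alphaF_le i); rewrite -/f -/aR -rkr.
  by move=> /le_trans; apply; rewrite le_eqVlt; apply/orP; left; apply/eqP; ring.
move: near; rewrite -/f -/aR -/rk => near.
by apply/orP; right; rewrite /gam; lra.
Qed.

Lemma S_rho_const (R : realType) (r : nat) (rho : R) :
  (0 < r)%N -> 0 <= rho <= 1 -> S_rho rho (fun _ : 'I_r => rho / r%:R).
Proof.
move=> r_gt0 /andP[rho0 rho1]; have r_gt0R : 0 < r%:R :> R by rewrite ltr0n.
split=> [j|]; last by rewrite sumr_const card_ord -[_ *+ r]mulr_natr divfK ?gt_eqF.
by rewrite divr_ge0 ?ler0n //= -[X in _ <= X]mul1r ler_pM2r ?invr_gt0.
Qed.

Theorem lemma6 (R : realType) (r : nat) (V : finType) (adj : rel V) (alpha : R) :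
  (2 <= r)%N ->
  simple_graph adj ->
  r_critical r adj ->
  0 < alpha ->
  is_alphaF r adj alpha ->
  (0 < rhoF r adj alpha - ((1 - r%:R^-1)%:E))%E.
Proof.
move=> r_ge2 adj_simple adj_crit alpha_gt0 alphaF.
have r_gt0 : (0 < r)%N by apply: leq_trans r_ge2.
have V3 : (3 <= #|V|)%N by apply: leq_trans (chi_le_card adj); rewrite adj_crit.1 ltnS.
rewrite sube_gt0 /rhoF; case: ifP => deg_gt; last exact: ltry.
have alphaF_le i := alphaF_le i adj_simple adj_crit V3 alphaF.
have [delta delta_gt0 PF_gt] := PF_eval_gt_linear r_gt0 (ltnW V3) deg_gt alpha_gt0 alphaF_le.
have r1 : (r%:R - 1) / r%:R = 1 - r%:R^-1 :> R by rewrite mulrBl mulfV ?mul1r // pnatr_eq0 -lt0n.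
have r_inv_le1 : r%:R^-1 <= 1 :> R by rewrite invf_le1 ?ler1n ?ltr0n.
apply: (@lt_le_trans _ _ ((1 - r%:R^-1) + delta)%:E); first by rewrite lte_fin; lra.
apply/ereal_infP => _ [rho [/andP[rho_gt rho_lt1] p_le] <-]; rewrite lee_fin leNgt.
apply/negP => rho_lt; rewrite r1 in rho_gt p_le.
have [|L alpha_L L_le] := PF_gt (rho - (1 - r%:R^-1)); first by apply/andP; split; lra.
have : L <= p_rho r adj rho.
  apply: lb_le_inf.
    exists (PF_eval adj (fun _ : 'I_r => rho / r%:R)), (fun _ : 'I_r => rho / r%:R) => //.
    by apply: S_rho_const => //; apply/andP; split; lra.
  by move=> _ [xi xi_S <-]; apply: L_le; rewrite r1 addrC subrK.
lra.
Qed.
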